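(* Let $X$ be a compact metric space and $f\colon X\to X$ a continuous map. Suppose there is $x\in X$ such that $\omega_f(x)$ is infinite, contains a periodic point of $f$, and contains a point which is isolated in $\omega_f(x)$ (with its relative topology). Then there exist $\delta>0$ and an infinite $\delta$-scrambled set for $f$.
   Context: $\omega_f(x)$ denotes the $\omega$-limit set of $x$, i.e. the set of limit points of the sequence $(f^n(x))_{n\ge0}$. For $\delta>0$, a pair $(u,v)$ of points is $\delta$-scrambled if $\liminf_{n\to\infty}d(f^n(u),f^n(v))=0$ and $\limsup_{n\to\infty}d(f^n(u),f^n(v))\ge\delta$; a set is $\delta$-scrambled if every pair of its distinct points is $\delta$-scrambled. *)

From HB Require Import structures.
From mathcomp Require Import all_boot all_order all_algebra.
From mathcomp Require Import all_classical all_reals all_analysis.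
Set Implicit Arguments. Unset Strict Implicit. Unset Printing Implicit Defensive.
Import Order.TTheory GRing.Theory Num.Theory.
Local Open Scope classical_set_scope.
Local Open Scope ring_scope.

Definition omega_limit {T : topologicalType} (f : T -> T) (x : T) : set T :=
  cluster ((fun n : nat => iter n f x) @ \oo).

Definition periodic_point {T : Type} (f : T -> T) (p : T) : Prop :=
  exists n : nat, (0 < n)%N /\ iter n f p = p.

(* (u,v) is delta-scrambled: liminf d(f^n u, f^n v) = 0 and limsup >= delta
   (liminf/limsup taken in the extended reals, hence always defined) *)
Definition scrambled_pair {R : realType} {X : metricType R} (f : X -> X)
    (delta : R) (u v : X) : Prop :=
  limn_einf (fun n : nat => (mdist (iter n f u) (iter n f v))%:E) = 0%E /\
  (delta%:E <= limn_esup (fun n : nat => (mdist (iter n f u) (iter n f v))%:E))%E.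

Definition scrambled_set {R : realType} {X : metricType R} (f : X -> X)
    (delta : R) (S : set X) : Prop :=
  forall u v, S u -> S v -> u <> v -> scrambled_pair f delta u v.

From HB Require Import structures.
From mathcomp Require Import all_boot all_order all_algebra.
From mathcomp Require Import all_classical all_reals all_analysis.
From mathcomp Require Import lra.
Import Order.TTheory GRing.Theory Num.Theory.
Local Open Scope classical_set_scope.
Local Open Scope ring_scope.

(* Let p in omega(x) have period m and let q be isolated in omega(x), with
   isolation radius r.  An isolated point of an infinite omega-limit set is
   not periodic: otherwise the orbit of x, once close to q, would shadow the
   periodic orbit of q forever, and omega(x) would be that finite orbit.  By
   invariance of omega(x) and isolation, d(q, f^k q) >= r for every k > 0.
   The points f^(jm) x are pairwise distinct (omega(x) is infinite) and form
   an r/2-scrambled set: f^n maps a pair of them to (y, f^k y) with m | k;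
   when y is close to p both points are close to f^k p = p, and when y is
   close to q they are at distance at least r - r/4 - r/4. *)

Section limn_esup_einf.
Context {R : realType}.

Lemma limn_esup_ge_frequently (a : nat -> R) (c : R) :
  (forall N, exists n, (N <= n)%N /\ c <= a n) ->
  (c%:E <= limn_esup (fun n => (a n)%:E))%E.
Proof.
move=> ca; rewrite limn_esup_lim; apply: lime_ge; first exact: is_cvg_esups.
apply: nearW => N; have [n [Nn can]] := ca N.
apply: (@le_trans _ _ (a n)%:E); first by rewrite lee_fin.
by apply: ereal_sup_ubound; exists n.
Qed.

Lemma limn_einf_eq0_frequently (a : nat -> R) :
  (forall n, 0 <= a n) ->
  (forall e, 0 < e -> forall N, exists n, (N <= n)%N /\ a n < e) ->
  limn_einf (fun n => (a n)%:E) = 0%E.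
Proof.
move=> a_ge0 small; rewrite limn_einf_lim; apply/eqP; rewrite eq_le; apply/andP.
split; last first.
  apply: lime_ge; first exact: is_cvg_einfs.
  by apply: nearW => N; apply: le_ereal_inf_tmp => _ [n _ <-]; rewrite lee_fin.
apply/lee_addgt0Pr => e e0; rewrite add0e.
apply: lime_le; first exact: is_cvg_einfs.
apply: nearW => N; have [n [Nn ane]] := small e e0 N.
apply: (@le_trans _ _ (a n)%:E); last by rewrite lee_fin ltW.
by apply: ereal_inf_lbound; exists n.
Qed.

End limn_esup_einf.

Section metric_space.
Context {R : realType} {X : metricType R}.
Implicit Types (w : nat -> X) (P : set nat).

Definition cluster_along w P (y : X) :=
  forall e, 0 < e -> forall N, exists n, [/\ (N <= n)%N, P n & mdist y (w n) < e].

Lemma cluster_alongT w y : cluster (w @ \oo) y <-> cluster_along w setT y.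
Proof.
split=> [wy e e0 N|wy A B [N _ NA] /nbhs_ballP[e e0 eB]].
  have /(wy _ (ball y e)) : (w @ \oo) (w @` [set n | (N <= n)%N]).
    by exists N => // n /= Nn; exists n.
  by move=> /(_ (nbhsx_ballx _ _ e0))[_ [[n Nn <-]]]; rewrite ballEmdist; exists n.
have [n [Nn _ yn]] := wy e e0 N.
by exists (w n); split; [exact: NA | apply: eB; rewrite ballEmdist].
Qed.

Lemma cluster_alongS w P Q y :
  P `<=` Q -> cluster_along w P y -> cluster_along w Q y.
Proof.
by move=> PQ wy e e0 N; have [n [Nn Pn yn]] := wy e e0 N; exists n; split=> //; apply: PQ.
Qed.

Lemma compact_cluster_along w P : compact [set: X] ->
  (forall N, exists n, (N <= n)%N /\ P n) -> exists y, cluster_along w P y.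
Proof.
move=> cpt Pinf.
pose F := filter_from [set: nat] (fun N => [set n | (N <= n)%N /\ P n]).
have FF : ProperFilter F.
  apply: filter_from_proper => [|N _]; last by have [n] := Pinf N; exists n.
  apply: filter_fromT_filter; first by exists 0%N.
  by move=> i j; exists (maxn i j) => n [/[!geq_max]/andP[iN jN] Pn].
have [y [_ wy]] := cpt (w @ F) (fmap_proper_filter w FF) filterT.
exists y => e e0 N.
have /(wy _ (ball y e)) : (w @ F) (w @` [set n | (N <= n)%N /\ P n]).
  by exists N => // n /= Nn; exists n.
by move=> /(_ (nbhsx_ballx _ _ e0))[_ [[n [Nn Pn] <-]]]; rewrite ballEmdist; exists n.
Qed.

Lemma cluster_along_mdist_le w P y q r : cluster_along w P y ->
  (forall n, P n -> mdist q (w n) < r) -> mdist q y <= r.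
Proof.
move=> wy qr; apply/ler_addgt0Pr => e e0.
have [n [_ Pn yn]] := wy e e0 0%N.
apply: le_trans (metric_triangle q (w n) y) _; apply: ltW.
by apply: ltrD; [exact: qr | rewrite metric_sym].
Qed.

Lemma compact_cvg_cluster_along w q : compact [set: X] ->
  (forall y, cluster_along w setT y -> y = q) -> w @ \oo --> q.
Proof.
move=> cpt cluster_q.
apply: (compact_cluster_set1 (@metric_hausdorff _ X) cpt filterT) => //.
  exact: filterT.
apply/seteqP; split=> [y /cluster_alongT/cluster_q //|_ ->].
have [|y wy] := @compact_cluster_along w setT cpt; first by move=> N; exists N.
by rewrite -(cluster_q y wy); apply/cluster_alongT.
Qed.

Lemma isolated_mdist {A : set X} {q : X} : isolated A q ->
  exists2 r, 0 < r & forall y, A y -> mdist q y < r -> y = q.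
Proof.
move=> [_ [V /nbhs_ballP[r r0 rV] VA]]; exists r => // y Ay qy.
suff : (V `&` A) y by rewrite VA.
by split=> //; apply: rV; rewrite ballEmdist.
Qed.

Lemma continuous_mdist_lt {g : X -> X} {y : X} : {for y, continuous g} ->
  forall e, 0 < e -> exists2 d, 0 < d & forall z, mdist y z < d -> mdist (g y) (g z) < e.
Proof.
move=> gy e e0; have /nbhs_ballP[d d0 dg] := gy (ball (g y) e) (nbhsx_ballx _ _ e0).
by exists d => // z yz; have := dg z; rewrite /= !ballEmdist; apply.
Qed.

Lemma mdist_finite_lb (v : nat -> X) y b : (forall i, (i < b)%N -> v i <> y) ->
  exists2 e, 0 < e & forall i, (i < b)%N -> e <= mdist y (v i).
Proof.
elim: b => [|b IHb] vy; first by exists 1.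
have [e e0 ev] := IHb (fun i ib => vy i (ltnW ib)).
have yb0 : 0 < mdist y (v b) by rewrite mdist_gt0; apply/eqP=> yb; exact: (vy b).
exists (Num.min e (mdist y (v b))) => [|i]; first by rewrite lt_min e0.
by rewrite ltnS leq_eqVlt => /predU1P[->|ib]; rewrite ge_min ?lexx ?orbT ?ev.
Qed.

End metric_space.

Section omega_limit.
Context {R : realType} {X : metricType R} {f : X -> X}.
Hypothesis fc : continuous f.

Lemma continuous_iter k : continuous (iter k f).
Proof. by elim: k => [|k IHk] y; [exact: cvg_id | exact: continuous_comp (IHk y) (fc _)]. Qed.

Lemma omega_limit_iter x y k : omega_limit f x y -> omega_limit f x (iter k f y).
Proof.
move=> /cluster_alongT xy; apply/cluster_alongT => e e0 N.
have [d d0 kd] := continuous_mdist_lt (continuous_iter k y) e e0.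
have [n [Nn _ yn]] := xy d d0 N.
by exists (k + n)%N; split; rewrite ?iterD ?kd // (leq_trans Nn) ?leq_addl.
Qed.

Lemma omega_limit_shift x y c : omega_limit f x y -> omega_limit f (iter c f x) y.
Proof.
move=> /cluster_alongT xy; apply/cluster_alongT => e e0 N.
have [n [Nn _ yn]] := xy e e0 (N + c)%N.
have cn : (c <= n)%N by apply: leq_trans Nn; rewrite leq_addl.
by exists (n - c)%N; split; rewrite // -?iterD ?subnK // leq_subRL // addnC.
Qed.

(* Every n >= n0 is n0 + k s + i with i < s, and iter (n0 + k s + i) f x
   tends to iter i f q uniformly in i < s. *)
Lemma omega_limit_finite_of_cvg (x q : X) (n0 s : nat) : (0 < s)%N ->
  (fun k => iter (n0 + k * s) f x) @ \oo --> q -> finite_set (omega_limit f x).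
Proof.
move=> s0 xq.
suff : omega_limit f x `<=` (fun i => iter i f q) @` `I_s.
  by move/sub_finite_set; apply; apply/finite_image/finite_II.
have xqi (i : 'I_s) : (fun k => iter (i + (n0 + k * s)) f x) @ \oo --> iter i f q.
  under eq_fun do rewrite iterD.
  exact: cvg_comp xq (continuous_iter i q).
move=> y /cluster_alongT xy; apply: contrapT => yq.
have [e e0 qe] : exists2 e, 0 < e & forall i, (i < s)%N -> e <= mdist y (iter i f q).
  by apply: mdist_finite_lb => i si yi; apply: yq; exists i.
have e20 : 0 < e / 2 by rewrite divr_gt0.
have [K _ Kq] := filter_forall _ (fun i => metricType_numDomainType.cvgr_dist_lt (xqi i) e20).
have [n [Kn _ yn]] := xy _ e20 (n0 + K * s)%N.
have n0n : (n0 <= n)%N by apply: leq_trans Kn; rewrite leq_addr.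
pose t := (n - n0)%N.
have nE : n = (t %% s + (n0 + t %/ s * s))%N.
  by rewrite [RHS]addnC -addnA -divn_eq subnKC.
have Kt : (K <= t %/ s)%N by rewrite leq_divRL // leq_subRL.
have := Kq _ Kt (Ordinal (ltn_pmod t s0)); rewrite /= -nE => qn.
have := qe _ (ltn_pmod t s0); apply/negP; rewrite -ltNge.
apply: le_lt_trans (metric_triangle _ (iter n f x) _) _.
by rewrite [e]splitr (metric_sym (iter n f x)); apply: ltrD.
Qed.

Lemma omega_limit_finite_of_iter_eq x a b : (a < b)%N ->
  iter a f x = iter b f x -> finite_set (omega_limit f x).
Proof.
move=> ab xab; apply: (@omega_limit_finite_of_cvg x (iter a f x) a (b - a)).
  by rewrite subn_gt0.
have const k : iter (a + k * (b - a)) f x = iter a f x.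
  elim: k => [|k IHk]; first by rewrite addn0.
  by rewrite mulSn addnCA iterD IHk -iterD (subnK (ltnW ab)).
by under eq_fun do rewrite const; exact: cvg_cst.
Qed.

Lemma injective_orbit_of_infinite_omega_limit x :
  infinite_set (omega_limit f x) -> injective (fun n => iter n f x).
Proof.
move=> xinf a b xab; apply: contrapT => /eqP; rewrite neq_ltn => /orP[ab|ba]; apply: xinf.
  exact: omega_limit_finite_of_iter_eq ab xab.
exact: omega_limit_finite_of_iter_eq ba (esym xab).
Qed.

End omega_limit.

Lemma infinite_range_inj {T} (g : nat -> T) : injective g -> infinite_set (range g).
Proof. by move=> ginj; rewrite (eq_finite_set (inj_card_eq (in2W ginj))); exact: infinite_nat. Qed.

Section isolated_omega_limit_point.
Context {R : realType} {X : metricType R} {f : X -> X}.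
Hypotheses (cpt : compact [set: X]) (fc : continuous f).
Context {x q : X} {r : R}.
Hypotheses (xq : omega_limit f x q) (r0 : 0 < r).
Hypothesis q_iso : forall y, omega_limit f x y -> mdist q y < r -> y = q.

Let r2r : r / 2 < r. Proof. by move: r0; lra. Qed.

(* Otherwise infinitely often the orbit is within r/2 of q and s steps later
   it is not; a cluster point of such times is q, contradicting continuity of
   iter s f at its fixed point q. *)
Lemma eventually_return_isolated s : iter s f q = q -> exists N, forall n, (N <= n)%N ->
  mdist q (iter n f x) < r / 2 -> mdist q (iter (s + n) f x) < r / 2.
Proof.
move=> sq; apply: contrapT => no_return.
pose P := [set n | mdist q (iter n f x) < r / 2 /\ r / 2 <= mdist q (iter (s + n) f x)].
have Pinf N : exists n, (N <= n)%N /\ P n.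
  apply: contrapT => noP; apply: no_return; exists N => n Nn qn.
  by rewrite ltNge; apply/negP => qsn; apply: noP; exists n.
have [y xy] := compact_cluster_along (fun n => iter n f x) _ cpt Pinf.
have yq : y = q.
  apply: q_iso; first by apply/cluster_alongT; exact: cluster_alongS xy.
  by apply: le_lt_trans r2r; apply: cluster_along_mdist_le xy _ => n [].
subst y; have r20 : 0 < r / 2 by rewrite divr_gt0.
have [d d0 sd] := continuous_mdist_lt (continuous_iter fc s q) _ r20.
have [n [_ [_ Psn] qn]] := xy d d0 0%N.
by have := sd _ qn; rewrite sq -iterD ltNge Psn.
Qed.

Lemma cvg_iter_return_isolated s : (0 < s)%N -> iter s f q = q ->
  exists n0, (fun k => iter (n0 + k * s) f x) @ \oo --> q.
Proof.
move=> s0 sq; have [N return_q] := eventually_return_isolated _ sq.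
have r20 : 0 < r / 2 by rewrite divr_gt0.
have [n0 [Nn0 _ qn0]] := (cluster_alongT _ _).1 xq _ r20 N.
have stay k : mdist q (iter (n0 + k * s) f x) < r / 2.
  elim: k => [|k IHk]; first by rewrite addn0.
  by rewrite mulSn addnCA; apply: return_q => //; apply: leq_trans Nn0 (leq_addr _ _).
exists n0; apply: compact_cvg_cluster_along => // y ky; apply: q_iso.
  apply/cluster_alongT => e e0 M; have [k [Mk _ yk]] := ky e e0 M.
  exists (n0 + k * s)%N; split=> //.
  by apply: leq_trans (leq_addl _ _); apply: leq_trans Mk (leq_pmulr _ s0).
by apply: le_lt_trans r2r; apply: cluster_along_mdist_le ky (fun k _ => stay k).
Qed.

Lemma isolated_periodic_omega_limit_finite s : (0 < s)%N -> iter s f q = q ->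
  finite_set (omega_limit f x).
Proof.
move=> s0 sq; have [n0] := cvg_iter_return_isolated _ s0 sq.
exact: omega_limit_finite_of_cvg.
Qed.

Lemma isolated_mdist_iter_ge : infinite_set (omega_limit f x) ->
  forall k, (0 < k)%N -> r <= mdist q (iter k f q).
Proof.
move=> xinf k k0; rewrite leNgt; apply/negP => qk.
apply/xinf/(isolated_periodic_omega_limit_finite _ k0).
by apply: q_iso => //; exact: omega_limit_iter.
Qed.

End isolated_omega_limit_point.

Lemma scrambled_pairC {R : realType} {X : metricType R} (f : X -> X) d u v :
  scrambled_pair f d u v -> scrambled_pair f d v u.
Proof.
rewrite /scrambled_pair; have -> // : (fun n => (mdist (iter n f v) (iter n f u))%:E) =
                                     (fun n => (mdist (iter n f u) (iter n f v))%:E).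
by apply: funext => n; rewrite metric_sym.
Qed.

Section scrambled_iterate.
Context {R : realType} {X : metricType R} {f : X -> X}.
Hypothesis fc : continuous f.

Let iter_comm y k n : iter n f (iter k f y) = iter k f (iter n f y).
Proof. by rewrite -!iterD addnC. Qed.

Lemma limn_einf_mdist_iter_periodic y p k : omega_limit f y p -> iter k f p = p ->
  limn_einf (fun n => (mdist (iter n f y) (iter n f (iter k f y)))%:E) = 0%E.
Proof.
move=> /cluster_alongT yp kp.
apply: limn_einf_eq0_frequently => [n|e e0 N]; first exact: mdist_ge0.
have e20 : 0 < e / 2 by rewrite divr_gt0.
have [d d0 kd] := continuous_mdist_lt (continuous_iter fc k p) _ e20.
have de0 : 0 < Num.min d (e / 2) by rewrite lt_min d0 e20.
have [n [Nn _]] := yp _ de0 N; rewrite lt_min => /andP[pd pe].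
exists n; split=> //; rewrite iter_comm.
apply: le_lt_trans (metric_triangle _ p _) _.
rewrite [e]splitr metric_sym; apply: ltrD => //.
by rewrite -[X in mdist X _]kp; exact: kd.
Qed.

Lemma limn_esup_mdist_iter_ge y q k r : 0 < r -> omega_limit f y q ->
  r <= mdist q (iter k f q) ->
  ((r / 2)%:E <= limn_esup (fun n => (mdist (iter n f y) (iter n f (iter k f y)))%:E))%E.
Proof.
move=> r0 /cluster_alongT yq qk.
apply: limn_esup_ge_frequently => N.
have r40 : 0 < r / 4 by rewrite divr_gt0.
have [d d0 kd] := continuous_mdist_lt (continuous_iter fc k q) _ r40.
have dr0 : 0 < Num.min d (r / 4) by rewrite lt_min d0 r40.
have [n [Nn _]] := yq _ dr0 N; rewrite lt_min => /andP[qd qr].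
exists n; split=> //; rewrite iter_comm.
(* with z := f^n y, r <= d(q, z) + d(z, f^k z) + d(f^k z, f^k q) and the
   outer terms are < r/4 *)
have := kd _ qd; set z := iter n f y => kqz.
have := metric_triangle q z (iter k f q).
have := metric_triangle z (iter k f z) (iter k f q).
rewrite (metric_sym (iter k f z)); lra.
Qed.

Lemma scrambled_pair_iter y p q k r : 0 < r ->
  omega_limit f y p -> iter k f p = p ->
  omega_limit f y q -> r <= mdist q (iter k f q) ->
  scrambled_pair f (r / 2) y (iter k f y).
Proof.
move=> r0 yp kp yq qk; split.
  exact: limn_einf_mdist_iter_periodic yp kp.
exact: limn_esup_mdist_iter_ge r0 yq qk.
Qed.

End scrambled_iterate.

Theorem proposition1p5 (R : realType) (X : metricType R) (f : X -> X) :
  compact [set: X] -> continuous f ->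
  (exists x : X,
     infinite_set (omega_limit f x) /\
     (exists p, omega_limit f x p /\ periodic_point f p) /\
     (exists q, isolated (omega_limit f x) q)) ->
  exists delta : R, 0 < delta /\
    exists S : set X, infinite_set S /\ scrambled_set f delta S.
Proof.
move=> cpt fc [x [xinf [[p [xp [m [m0 mp]]]] [q qiso]]]].
have xq := isolatedS qiso.
have [r r0 q_iso] := isolated_mdist qiso.
have far := isolated_mdist_iter_ge cpt fc xq r0 q_iso xinf.
pose g j := iter (j * m) f x.
have g_inj : injective g.
  move=> a b /(injective_orbit_of_infinite_omega_limit fc _ xinf) /eqP.
  by rewrite eqn_pmul2r // => /eqP.
exists (r / 2); split; first by rewrite divr_gt0.
exists (range g); split; first exact: infinite_range_inj.
move=> _ _ [a _ <-] [b _ <-].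
wlog ab : a b / (a < b)%N => [wlog_ab gab|_].
  case: (ltngtP a b) => [ab|ba|eab]; last by rewrite eab in gab.
    exact: wlog_ab.
  by apply/scrambled_pairC/wlog_ab => //; apply: nesym.
have -> : g b = iter ((b - a) * m) f (g a) by rewrite /g -iterD -mulnDl (subnK (ltnW ab)).
apply: (scrambled_pair_iter fc _ p q _ r r0).
- exact: omega_limit_shift.
- by rewrite iterM iter_fix.
- exact: omega_limit_shift.
- by apply: far; rewrite muln_gt0 subn_gt0 ab.
Qed.
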